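(* Let $X$ be a convex metric space over a Boolean ring $B$, let $0,0'\in X$, let $\{x_{1},\ldots,x_{n}\}$ be a base of $(X,0)$ and $\{y_{1},\ldots,y_{m}\}$ a base of $(X,0')$. Then $n=m$ and $d(0,x_i)=d(0',y_i)$ for $i=1,\ldots,n$. Moreover, there exists an isometry $f:X\to X$ with $f(0)=0'$ and $f(x_{i})=y_{i}$ for $i=1,\ldots,n$.
   Context: $B$ is a Boolean ring ($a\vee b=a+b+ab$, $a\le b\iff ab=a$; $a_1\oplus\cdots\oplus a_n$ denotes a sum of pairwise disjoint elements). A Boolean metric space over $B$: set $X$ with $d:X\times X\to B$, $d(x,y)=0\iff x=y$, symmetric, $d(x,z)\le d(x,y)\vee d(y,z)$. For $x_1,\dots,x_n\in X$, $a_1,\dots,a_n\in B$ with $a_1\oplus\cdots\oplus a_n=1$, $x$ is a convex combination of the $x_i$ with coefficients $a_i$ if $a_id(x,x_i)=0$ for all $i$; $X$ is convex if all such combinations exist. An isometry is a bijection preserving $d$. In a pointed space $(X,0)$, $|x|=d(0,x)$; $x,y$ are orthogonal if $d(x,y)=|x|\vee|y|$; a finite $R\subseteq X$ is orthogonal if $0\notin R$ and distinct elements are orthogonal; a referential of $(X,0)$ is an orthogonal $R$ such that every element of $X$ is a convex combination of elements of $R\cup\{0\}$; a base of $(X,0)$ is a referential $\{x_1,\dots,x_n\}$ with $|x_1|\ge\cdots\ge|x_n|$. *)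

From HB Require Import structures.
From mathcomp Require Import all_boot all_order all_algebra.
Set Implicit Arguments. Unset Strict Implicit. Unset Printing Implicit Defensive.
Import GRing.Theory.
Local Open Scope ring_scope.

Definition boolean_ring (B : pzRingType) : Prop := forall a : B, a * a = a.

Section BoolMetric.
Variables (B : pzRingType) (X : Type) (d : X -> X -> B).

Definition bjoin (a b : B) : B := a + b + a * b.
Definition ble (a b : B) : Prop := a * b = a.

Definition boolean_metric : Prop :=
  [/\ (forall x y, d x y = 0 <-> x = y),
      (forall x y, d x y = d y x) &
      (forall x y z, ble (d x z) (bjoin (d x y) (d y z)))].

Definition disjoint_partition (k : nat) (a : 'I_k -> B) : Prop :=
  (forall i j, i != j -> a i * a j = 0) /\ \sum_(i < k) a i = 1.

Definition convex_comb (k : nat) (xs : 'I_k -> X) (a : 'I_k -> B) (x : X) : Prop :=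
  forall i, a i * d x (xs i) = 0.

Definition convex_space : Prop :=
  forall (k : nat) (xs : 'I_k -> X) (a : 'I_k -> B),
    disjoint_partition a -> exists x, convex_comb xs a x.

Definition bisometry (f : X -> X) : Prop :=
  bijective f /\ forall x y, d (f x) (f y) = d x y.

Definition bnorm (o x : X) : B := d o x.

Definition orthogonal (o x y : X) : Prop := d x y = bjoin (bnorm o x) (bnorm o y).

Definition orthogonal_set (o : X) (n : nat) (r : 'I_n -> X) : Prop :=
  [/\ injective r, (forall i, r i <> o) &
      (forall i j, i != j -> orthogonal o (r i) (r j))].

Definition referential (o : X) (n : nat) (r : 'I_n -> X) : Prop :=
  orthogonal_set o r /\
  forall x : X, exists (k : nat) (xs : 'I_k -> X) (a : 'I_k -> B),
    [/\ (forall i, xs i = o \/ exists j, xs i = r j),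
        disjoint_partition a & convex_comb xs a x].

Definition base (o : X) (n : nat) (r : 'I_n -> X) : Prop :=
  referential o r /\
  forall i j : 'I_n, (i <= j)%N -> ble (bnorm o (r j)) (bnorm o (r i)).

End BoolMetric.

(* In a Boolean ring every element is idempotent, so the ring is commutative
   of characteristic 2; "c * e = 0" reads "e vanishes on the part c". The
   basic metric fact is localization: if y and z coincide on c, then on c
   every distance to y equals the distance to z.

   A base x_1 .. x_n of (X, o), preceded by o, forms a frame: points P_J with
   norms N_J whose mutual distances are prescribed and which generate X by
   convex combinations. Every point p has coordinates N_J (1 + d(p, P_J)),
   which form a partition of unity, determine p, and give d(p, q) by a
   bilinear formula.
   - Dimension: a Boolean pigeonhole principle shows that for frames with
     sorted norms N_K <= M_K; used in both directions it gives n = m and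
     equal norms.
   - Isometry: for frames with equal norms, convexity transports every point
     to the point with the same coordinates in the other frame; the distance
     formula makes this transport an isometry mapping the frames onto each
     other. *)

From mathcomp Require Import all_boot all_order all_algebra.
From Stdlib Require Import ClassicalEpsilon.
Set Implicit Arguments. Unset Strict Implicit. Unset Printing Implicit Defensive.
Import GRing.Theory.
Local Open Scope ring_scope.

Section BooleanRing.
Variables (B : pzRingType) (HB : boolean_ring B).

(* Characteristic 2, from (a + a)^2 = a + a. *)
Lemma bool_addxx (a : B) : a + a = 0.
Proof.
have := HB (a + a); rewrite mulrDl !mulrDr !HB => E.
by move/(congr1 (fun t => t - (a + a))): E; rewrite addrK subrr.
Qed.

Lemma bool_opp (a : B) : - a = a.
Proof. by have /eqP := bool_addxx a; rewrite addr_eq0 => /eqP {2}->. Qed.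

(* Expanding (a + b)^2 = a + b leaves ab + ba = 0, i.e. ab = ba. *)
Lemma boolC (a b : B) : a * b = b * a.
Proof.
have := HB (a + b); rewrite mulrDl !mulrDr !HB => E.
have E2 : a * b + b * a = 0.
  apply: (addrI (a + b)); rewrite addr0 -[RHS]E.
  by rewrite -!addrA; congr (_ + _); rewrite addrC -!addrA.
by have /eqP := E2; rewrite addr_eq0 bool_opp => /eqP.
Qed.

Lemma boolCA (a b c : B) : a * (b * c) = b * (a * c).
Proof. by rewrite !mulrA (boolC a b). Qed.

Lemma boolAC (a b c : B) : a * b * c = a * c * b.
Proof. by rewrite -!mulrA (boolC b c). Qed.

Lemma bool_compl (a : B) : a * (1 + a) = 0.
Proof. by rewrite mulrDr mulr1 HB bool_addxx. Qed.

Lemma bool_compl_id (c e : B) : c * e = 0 -> c * (1 + e) = c.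
Proof. by move=> ce0; rewrite mulrDr mulr1 ce0 addr0. Qed.

(* Antisymmetry of the order a <= b <-> a (1 + b) = 0. *)
Lemma bool_le_anti (a b : B) : a * (1 + b) = 0 -> b * (1 + a) = 0 -> a = b.
Proof.
have le_mul (u v : B) : u * (1 + v) = 0 -> u = u * v.
  by move/eqP; rewrite mulrDr mulr1 addr_eq0 bool_opp => /eqP.
by move=> /le_mul ab /le_mul ba; rewrite ab boolC -ba.
Qed.

Lemma partition_refine_eq (G H : nat -> B) (K : nat) :
  \sum_(J < K) G J = 1 ->
  (forall J, (J < K)%N -> G J * H J = G J) ->
  (forall J J', (J < K)%N -> (J' < K)%N -> J != J' -> H J * H J' = 0) ->
  forall J, (J < K)%N -> G J = H J.
Proof.
move=> sumG GH Hdisj J ltJK.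
have -> : H J = H J * \sum_(J < K) G J by rewrite sumG mulr1.
rewrite mulr_sumr (bigD1 (Ordinal ltJK)) //= big1 ?addr0; first by rewrite boolC GH.
move=> J' neJ'; rewrite -(GH J') // boolCA Hdisj ?mulr0 //.
by apply: contraNneq neJ' => eqJ; apply/eqP/val_inj.
Qed.

(* Removing the pigeon l renumbers the others through bump l. *)
Lemma bump_lt s l l' : (l' < s.+1)%N -> (bump l l' < s.+2)%N.
Proof. by rewrite /bump; case: (l <= l')%N => /= h; rewrite ?add1n ?add0n ?ltnS // ltnW. Qed.

(* Boolean pigeonhole principle: on an element u, s + 1 families E l
   (l <= s) each cover u, each vanishes on u beyond the holes J < s, and
   distinct families are disjoint at each hole; then u = 0. The induction
   on s splits u along whether the hole s is occupied by some family. *)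
Lemma bool_pigeonhole s : forall (K : nat) (E : nat -> nat -> B) (u : B),
  (forall l, (l < s.+1)%N -> u = u * \sum_(J < K) E l J) ->
  (forall l J, (l < s.+1)%N -> (s <= J)%N -> u * E l J = 0) ->
  (forall l l' J, (l < s.+1)%N -> (l' < s.+1)%N -> l != l' -> u * E l J * E l' J = 0) ->
  u = 0.
Proof.
elim: s => [|s IH] K E u cover beyond disj.
  by rewrite (cover 0%N) // mulr_sumr big1 // => J _; apply: beyond.
set T := \sum_(l < s.+2) E l s.
set w := u * (1 + T).
have split_u : u = w + \sum_(l < s.+2) u * E l s.
  by rewrite /w -mulr_sumr -/T -mulrDr -addrA bool_addxx addr0 mulr1.
have w0 : w = 0.
  apply: (IH K E).
  - by move=> l hl; rewrite /w boolAC -cover // ltnW.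
  - move=> l J hl; rewrite leq_eqVlt => /orP [/eqP <-|hJ].
      rewrite /w mulrDr mulr1 mulrDl mulr_sumr mulr_suml.
      rewrite (bigD1 (Ordinal (leqW hl))) //= -mulrA HB big1 ?addr0 ?bool_addxx //.
      by move=> l' ne; apply: disj => //; rewrite ltnW.
    by rewrite /w boolAC beyond ?mul0r // ltnW.
  - move=> l l' J hl hl' ne.
    by rewrite /w -!mulrA [(1 + T) * _]boolC !mulrA disj ?mul0r // ltnW.
rewrite split_u w0 add0r big1 // => l _.
apply: (IH K (fun l' J => E (bump l l') J)).
- by move=> l' hl'; rewrite boolAC -cover // bump_lt.
- move=> l' J hl'; rewrite leq_eqVlt => /orP [/eqP <-|hJ].
    by apply: disj => //; [exact: bump_lt | exact: neq_bump].
  by rewrite boolAC beyond ?mul0r // bump_lt.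
- move=> l1 l2 J hl1 hl2 ne.
  rewrite -!mulrA [E l s * _]boolC !mulrA disj ?mul0r // ?bump_lt //.
  by rewrite (inj_eq (can_inj (bumpK l))).
Qed.

End BooleanRing.

Section Localization.
Variables (B : pzRingType) (HB : boolean_ring B) (X : Type) (d : X -> X -> B)
  (Hd : boolean_metric d).

Lemma dist_xx x : d x x = 0.
Proof. by case: Hd => eq0 _ _; apply/eq0. Qed.

Lemma dist_eq0 x y : d x y = 0 -> x = y.
Proof. by case: Hd => eq0 _ _; move/eq0. Qed.

Lemma distC x y : d x y = d y x.
Proof. by case: Hd. Qed.

Lemma local_dist_le c x y z : c * d y z = 0 -> c * d x z * d x y = c * d x z.
Proof.
move=> cyz; case: Hd => _ _ tri; have T := tri x y z; rewrite /ble /bjoin in T.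
rewrite -{2}T !mulrDr [c * (d x z * d y z)](boolCA HB) cyz mulr0 addr0.
rewrite [c * (d x z * (d x y * d y z))](boolCA HB) [c * (d x y * d y z)](boolCA HB).
by rewrite cyz !mulr0 addr0 mulrA.
Qed.

Lemma local_dist_eq c x y z : c * d y z = 0 -> c * d x y = c * d x z.
Proof.
move=> cyz; have czy : c * d z y = 0 by rewrite distC.
by rewrite -(local_dist_le x czy) (boolAC HB) (local_dist_le x cyz).
Qed.

Lemma local_dist_subst c p p' q q' :
  c * d p p' = 0 -> c * d q q' = 0 -> c * d p q = c * d p' q'.
Proof.
move=> cp cq; rewrite distC (local_dist_eq q cp) distC.
exact: local_dist_eq.
Qed.

End Localization.

(* A base of (X, o) together with o is a frame. *)
Definition frame_dist (B : pzRingType) (N : nat -> B) (J K : nat) : B :=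
  if J == K then 0 else if J == 0%N then N K else if K == 0%N then N J
  else bjoin (N J) (N K).

Definition frame (B : pzRingType) (X : Type) (d : X -> X -> B)
    (n : nat) (P : nat -> X) (N : nat -> B) : Prop :=
  [/\ N 0%N = 1,
      (forall J K, (J < n.+1)%N -> (K < n.+1)%N -> d (P J) (P K) = frame_dist N J K) &
      (forall p, exists (k : nat) (xs : 'I_k -> X) (a : 'I_k -> B),
         [/\ (forall i, exists2 J, (J < n.+1)%N & xs i = P J),
             disjoint_partition a & convex_comb d xs a p])].

(* The J-th coordinate of p: the part of N J on which p coincides with P J. *)
Definition coord (B : pzRingType) (X : Type) (d : X -> X -> B)
    (P : nat -> X) (N : nat -> B) (p : X) (J : nat) : B :=
  N J * (1 + d p (P J)).

Definition sorted_norms (B : pzRingType) (n : nat) (N : nat -> B) : Prop :=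
  forall J K, (1 <= J)%N -> (J <= K)%N -> (K < n.+1)%N -> N K * N J = N K.

Section FrameDist.
Variables (B : pzRingType) (HB : boolean_ring B) (N : nat -> B) (N0 : N 0%N = 1).

Lemma frame_dist_norms J K : J != K -> N J * N K * frame_dist N J K = N J * N K.
Proof.
move=> neJK; rewrite /frame_dist (negbTE neJK).
case: eqP => [->|_]; first by rewrite N0 !mul1r HB.
case: eqP => [->|_]; first by rewrite N0 mulr1 HB.
rewrite /bjoin !mulrDr [N J * N K * N J](boolAC HB) HB -[N J * N K * N K]mulrA HB.
by rewrite HB (bool_addxx HB) add0r.
Qed.

Lemma frame_dist_origin J : frame_dist N J 0 * (1 + N J) = 0.
Proof.
rewrite /frame_dist; case: (J =P 0%N) => [->|/eqP neJ0] /=; first by rewrite mul0r.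
by rewrite (bool_compl HB).
Qed.

End FrameDist.

Section Coordinates.
Variables (B : pzRingType) (HB : boolean_ring B) (X : Type) (d : X -> X -> B)
  (Hd : boolean_metric d).
Variables (n : nat) (P : nat -> X) (N : nat -> B) (HP : frame d n P N).

Local Notation coord := (coord d P N).

Lemma coord_near p J : coord p J * d p (P J) = 0.
Proof. by rewrite /coord -mulrA mulrDl mul1r HB (bool_addxx HB) mulr0. Qed.

Lemma coord_ge c p J : c * d p (P J) = 0 -> c * N J = c -> c * coord p J = c.
Proof. by move=> cp cN; rewrite /coord mulrA cN bool_compl_id. Qed.

(* Distinct coordinates are disjoint: where p is close to both P J and P K,
   these points would be close to each other, yet they are at distance 1. *)
Lemma coord_disj p J K : (J < n.+1)%N -> (K < n.+1)%N -> J != K ->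
  coord p J * coord p K = 0.
Proof.
case: HP => N0 dP _ ltJ ltK neJK.
set c := coord p J * coord p K.
have cJ : c * d p (P J) = 0 by rewrite /c (boolAC HB) coord_near mul0r.
have cK : c * d p (P K) = 0 by rewrite /c -mulrA coord_near mulr0.
have := local_dist_subst HB Hd cJ cK; rewrite (dist_xx Hd) mulr0 dP // => cD.
have cNJ : c * N J = c by rewrite /c /coord (boolC HB) -!mulrA [N J * (N J * _)]mulrA HB.
have cNK : c * N K = c.
  rewrite /c /coord -!mulrA [(1 + d p (P K)) * N K](boolC HB).
  by rewrite [N K * (N K * _)]mulrA HB.
have -> : c = c * (N J * N K) by rewrite mulrA cNJ cNK.
by rewrite -(frame_dist_norms HB N0 neJK) mulrA (boolAC HB) -cD mul0r.
Qed.

Lemma coord_absorb p J : (J < n.+1)%N ->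
  coord p J * (1 + \sum_(K < n.+1) coord p K) = 0.
Proof.
move=> ltJ; rewrite mulrDr mulr1 mulr_sumr (bigD1 (Ordinal ltJ)) //= HB.
rewrite big1 ?addr0 ?(bool_addxx HB) // => K neK; apply: coord_disj => //.
by apply: contraNneq neK => eqJ; apply/eqP/val_inj.
Qed.

(* Every part c on which p coincides with some frame point is covered by the coordinates of p:
   split c along N J; outside N J, P J and hence p coincide with the origin. *)
Lemma coord_cover c p J : (J < n.+1)%N -> c * d p (P J) = 0 ->
  c * (1 + \sum_(K < n.+1) coord p K) = 0.
Proof.
have [N0 dP _] := HP; move=> ltJ cpJ.
have inside : c * N J * (1 + \sum_(K < n.+1) coord p K) = 0.
  have c'pJ : c * N J * d p (P J) = 0 by rewrite (boolAC HB) cpJ mul0r.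
  have c'N : c * N J * N J = c * N J by rewrite -mulrA HB.
  by rewrite -(coord_ge c'pJ c'N) -mulrA coord_absorb // mulr0.
have outside : c * (1 + N J) * (1 + \sum_(K < n.+1) coord p K) = 0.
  set c' := c * (1 + N J).
  have c'pJ : c' * d p (P J) = 0 by rewrite /c' (boolAC HB) cpJ mul0r.
  have c'oo : c' * d (P 0%N) (P 0%N) = 0 by rewrite (dist_xx Hd) mulr0.
  have c'po : c' * d p (P 0%N) = 0.
    rewrite (local_dist_subst HB Hd c'pJ c'oo) dP // /c' -mulrA (boolC HB (1 + N J)).
    by rewrite (frame_dist_origin HB) mulr0.
  have c'N : c' * N 0%N = c' by rewrite N0 mulr1.
  by rewrite -(coord_ge c'po c'N) -mulrA coord_absorb // mulr0.
have -> : c = c * N J + c * (1 + N J) by rewrite -mulrDr addrCA (bool_addxx HB) addr0 mulr1.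
by rewrite mulrDl inside outside addr0.
Qed.

Lemma coord_sum p : \sum_(J < n.+1) coord p J = 1.
Proof.
have [_ _ cover] := HP.
suff : 1 + \sum_(J < n.+1) coord p J = 0.
  by move/eqP; rewrite addr_eq0 (bool_opp HB) => /eqP ->.
have [k [xs [a [xsP [_ sum_a] comb]]]] := cover p.
rewrite -[LHS]mul1r -{1}sum_a mulr_suml big1 // => i _.
have [J ltJ eqJ] := xsP i.
by apply: (coord_cover ltJ); rewrite -eqJ; apply: comb.
Qed.

Lemma coord_partition p : disjoint_partition (fun J : 'I_n.+1 => coord p J).
Proof. by split; [move=> J K neJK; apply: coord_disj | exact: coord_sum]. Qed.

Lemma coord_inj p q : (forall J, (J < n.+1)%N -> coord p J = coord q J) -> p = q.
Proof.
move=> eq_coord; apply: (dist_eq0 Hd).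
rewrite -[d p q]mul1r -(coord_sum p) mulr_suml big1 // => J _.
have pJ := coord_near p J.
have qJ : coord p J * d q (P J) = 0 by rewrite eq_coord // coord_near.
by rewrite (local_dist_subst HB Hd pJ qJ) (dist_xx Hd) mulr0.
Qed.

Lemma dist_coord p q : d p q =
  \sum_(J < n.+1) \sum_(K < n.+1) coord p J * coord q K * d (P J) (P K).
Proof.
rewrite -[d p q]mul1r -(coord_sum p) mulr_suml; apply: eq_bigr => J _.
transitivity (coord p J * (\sum_(K < n.+1) coord q K) * d p q); first by rewrite coord_sum mulr1.
rewrite mulr_sumr mulr_suml; apply: eq_bigr => K _.
have pJ : coord p J * coord q K * d p (P J) = 0 by rewrite (boolAC HB) coord_near mul0r.
have qK : coord p J * coord q K * d q (P K) = 0 by rewrite -mulrA coord_near mulr0.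
exact: (local_dist_subst HB Hd pJ qK).
Qed.

End Coordinates.

Section Dimension.
Variables (B : pzRingType) (HB : boolean_ring B) (X : Type) (d : X -> X -> B)
  (Hd : boolean_metric d).
Variables (m : nat) (Q : nat -> X) (M : nat -> B) (HQ : frame d m Q M).

(* On a part u where only the frame points Q 0 .. Q s are available (M J
   vanishes for J > s), there are no s + 2 pairwise orthogonal points at
   distance 1: two such points cannot share a coordinate. *)
Lemma frame_no_large_simplex (s : nat) (p : nat -> X) (u : B) :
  (forall l l', (l < s.+2)%N -> (l' < s.+2)%N -> l != l' -> u * d (p l) (p l') = u) ->
  (forall J, (s.+1 <= J)%N -> (J < m.+1)%N -> u * M J = 0) ->
  u = 0.
Proof.
move=> far sparse.
pose E l J := if (J < m.+1)%N then coord d Q M (p l) J else 0.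
apply: (bool_pigeonhole HB (s := s.+1) (K := m.+1) (E := E)).
- move=> l _; rewrite (eq_bigr (fun J : 'I_m.+1 => coord d Q M (p l) J)).
    by rewrite (coord_sum HB Hd HQ) mulr1.
  by move=> J _; rewrite /E ltn_ord.
- move=> l J _ leJ; rewrite /E; case: ifP => ltJ; last by rewrite mulr0.
  by rewrite /coord mulrA sparse // mul0r.
- move=> l l' J ltl ltl' nel; rewrite /E; case: ifP => ltJ; last by rewrite !mulr0.
  set c := u * coord d Q M (p l) J * coord d Q M (p l') J.
  have cl : c * d (p l) (Q J) = 0.
    by rewrite /c (boolAC HB) -(mulrA u) coord_near // mulr0 mul0r.
  have cl' : c * d (p l') (Q J) = 0 by rewrite /c -mulrA coord_near // mulr0.
  have := local_dist_subst HB Hd cl cl'; rewrite (dist_xx Hd) mulr0 => <-.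
  by rewrite /c (boolAC HB _ _ (d _ _)) (boolAC HB u _ (d _ _)) far.
Qed.

(* On u = N K (1 + M K) the points P 0 .. P K are
   pairwise at distance 1 while only Q 0 .. Q (K - 1) survive. *)
Lemma frame_norm_le n P N (HP : frame d n P N) :
  sorted_norms n N -> sorted_norms m M ->
  forall K, (1 <= K)%N -> (K < n.+1)%N -> N K * (1 + M K) = 0.
Proof.
move=> sortN sortM [//|s] _ ltK.
have [N0 dP _] := HP.
set u := N s.+1 * (1 + M s.+1).
have uN l : (l < s.+2)%N -> u * N l = u.
  case: l => [|l] ltl; first by rewrite N0 mulr1.
  by rewrite /u (boolAC HB) sortN.
apply: (frame_no_large_simplex (s := s) (p := P)).
- move=> l l' ltl ltl' nel.
  rewrite dP; [|exact: leq_trans ltl ltK|exact: leq_trans ltl' ltK].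
  have u_le : u = u * (N l * N l') by rewrite mulrA !uN.
  by rewrite {1}u_le -mulrA (frame_dist_norms HB N0 nel) -u_le.
- move=> J leJ ltJ.
  rewrite /u -mulrA mulrDl mul1r (boolC HB (M s.+1)) sortM //.
  by rewrite (bool_addxx HB) mulr0.
Qed.

End Dimension.

Section Isometry.
Variables (B : pzRingType) (HB : boolean_ring B) (X : Type) (d : X -> X -> B)
  (Hd : boolean_metric d) (Hconv : convex_space d).
Variables (n : nat) (N : nat -> B).

(* Two frames with the same norms: the convex combination of the Q J with
   the coordinates of p in P has, in Q, the same coordinates as p in P. *)
Lemma coord_transport P Q : frame d n P N -> frame d n Q N -> exists f : X -> X,
  forall p J, (J < n.+1)%N -> coord d Q N (f p) J = coord d P N p J.
Proof.
move=> HP HQ.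
have transport p :
    exists q, forall J, (J < n.+1)%N -> coord d Q N q J = coord d P N p J.
  have [q comb] := Hconv (fun J : 'I_n.+1 => Q J) (coord_partition HB Hd HP p).
  exists q => J ltJ; symmetry.
  apply: (partition_refine_eq HB (K := n.+1)) => //.
  - exact: (coord_sum HB Hd HP).
  - move=> K ltK; apply: coord_ge; first exact: (comb (Ordinal ltK)).
    by rewrite /coord (boolAC HB) HB.
  - by move=> K K' ltK ltK' neK; apply: (coord_disj HB Hd HQ).
exists (fun p => proj1_sig (constructive_indefinite_description _ (transport p))).
by move=> p J ltJ; case: (constructive_indefinite_description _ _) => q /= ->.
Qed.

Lemma frame_isometry P Q : frame d n P N -> frame d n Q N -> exists f : X -> X,
  bisometry d f /\ forall J, (J < n.+1)%N -> f (P J) = Q J.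
Proof.
move=> HP HQ; have [f coord_f] := coord_transport HP HQ.
have [g coord_g] := coord_transport HQ HP.
have dPQ J K : (J < n.+1)%N -> (K < n.+1)%N -> d (P J) (P K) = d (Q J) (Q K).
  by case: HP => _ dP _; case: HQ => _ dQ _ ltJ ltK; rewrite dP // dQ.
exists f; split; first split.
- exists g => p.
    by apply: (coord_inj HB Hd HP) => J ltJ; rewrite coord_g // coord_f.
  by apply: (coord_inj HB Hd HQ) => J ltJ; rewrite coord_f // coord_g.
- move=> p q; rewrite (dist_coord HB Hd HQ) (dist_coord HB Hd HP).
  by apply: eq_bigr => J _; apply: eq_bigr => K _; rewrite !coord_f // dPQ.
- by move=> J ltJ; apply: (coord_inj HB Hd HQ) => K ltK; rewrite coord_f // /coord dPQ.
Qed.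

End Isometry.

(* A base x of (X, o), listed as P 0 = o, P (i + 1) = x i, with norms N 0 = 1
   and N (i + 1) = |x i|; beyond n the points are o and the norms vanish. *)
Definition base_point (X : Type) (o : X) (n : nat) (x : 'I_n -> X) (J : nat) : X :=
  if J is j.+1 then (if (insub j : option 'I_n) is Some i then x i else o) else o.

Definition base_norm (B : pzRingType) (X : Type) (d : X -> X -> B) (o : X) (n : nat)
    (x : 'I_n -> X) (J : nat) : B :=
  if J is 0%N then 1 else bnorm d o (base_point o x J).

Lemma base_pointS (X : Type) (o : X) n (x : 'I_n -> X) (i : 'I_n) :
  base_point o x i.+1 = x i.
Proof. by rewrite /base_point valK. Qed.

Lemma base_point_cases n J : (J < n.+1)%N -> J = 0%N \/ exists i : 'I_n, J = i.+1.
Proof. by case: J => [|j] ltJ; [left | right; exists (Ordinal (ltJ : (j < n)%N))]. Qed.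

Section Base.
Variables (B : pzRingType) (X : Type) (d : X -> X -> B) (Hd : boolean_metric d).
Variables (o : X) (n : nat) (x : 'I_n -> X) (Hx : base d o x).

Lemma base_frame : frame d n (base_point o x) (base_norm d o x).
Proof.
have [[[_ _ orth] cover] _] := Hx.
split => //.
- move=> J K ltJ ltK.
  have [->|[i ->]] := base_point_cases ltJ; have [->|[i' ->]] := base_point_cases ltK.
  + by rewrite /frame_dist eqxx (dist_xx Hd).
  + by [].
  + by rewrite /frame_dist /= distC.
  + rewrite /frame_dist /base_norm eqSS; case: eqP => [/val_inj ->|/eqP ne].
      by rewrite (dist_xx Hd).
    by rewrite !base_pointS; apply: orth; apply: contra ne => /eqP ->.
- move=> p; have [k [xs [a [xsP part comb]]]] := cover p.
  exists k, xs, a; split => // i.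
  case: (xsP i) => [->|[j ->]]; first by exists 0%N.
  by exists j.+1; rewrite ?ltnS ?base_pointS.
Qed.

Lemma base_sorted : sorted_norms n (base_norm d o x).
Proof.
have [_ sorted] := Hx.
case=> [//|j] [//|k] _ lejk ltk.
have ltj : (j < n)%N by apply: leq_ltn_trans lejk ltk.
have := sorted (Ordinal ltj) (Ordinal (ltk : (k < n)%N)) lejk.
by rewrite /ble /base_norm -!(base_pointS o x).
Qed.

Lemma base_norm_out J : (n < J)%N -> base_norm d o x J = 0.
Proof.
case: J => [//|j] ltj; rewrite /base_norm /bnorm /base_point insubF ?(dist_xx Hd) //.
by rewrite ltnNge -ltnS ltj.
Qed.

Lemma base_norm_last : (0 < n)%N -> base_norm d o x n <> 0.
Proof.
have [[[_ neo _] _] _] := Hx.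
case: n x neo => [//|n'] x' neo _.
by rewrite /base_norm (base_pointS o x' ord_max) => /(dist_eq0 Hd) /esym /neo.
Qed.

End Base.

Section TwoBases.
Variables (B : pzRingType) (HB : boolean_ring B) (X : Type) (d : X -> X -> B)
  (Hd : boolean_metric d) (o o' : X).

(* A base is never longer than another one: its last norm would vanish. *)
Lemma base_card_le n m (x : 'I_n -> X) (y : 'I_m -> X) :
  base d o x -> base d o' y -> (n <= m)%N.
Proof.
move=> Hx Hy; rewrite leqNgt; apply/negP => ltmn.
have n_gt0 : (0 < n)%N by apply: leq_ltn_trans ltmn.
apply: (base_norm_last Hd Hx n_gt0).
have := frame_norm_le HB Hd (base_frame Hd Hy) (base_frame Hd Hx)
  (base_sorted Hx) (base_sorted Hy) n_gt0 (ltnSn n).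
by rewrite (base_norm_out Hd o' y ltmn) addr0 mulr1.
Qed.

Lemma base_norms_eq n (x y : 'I_n -> X) :
  base d o x -> base d o' y ->
  forall J, (J < n.+1)%N -> base_norm d o x J = base_norm d o' y J.
Proof.
move=> Hx Hy [//|j] ltj.
have [Fx Fy] := (base_frame Hd Hx, base_frame Hd Hy).
have [Sx Sy] := (base_sorted Hx, base_sorted Hy).
by apply: (bool_le_anti HB);
  [exact: (frame_norm_le HB Hd Fy Fx) | exact: (frame_norm_le HB Hd Fx Fy)].
Qed.

End TwoBases.

Theorem mainTheorem5 (B : pzRingType) (X : Type) (d : X -> X -> B)
  (HB : boolean_ring B) (Hd : boolean_metric d) (Hconv : convex_space d)
  (o o' : X) (n m : nat) (x : 'I_n -> X) (y : 'I_m -> X)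
  (Hx : base d o x) (Hy : base d o' y) :
  n = m /\
  (forall (i : nat) (Hn : (i < n)%N) (Hm : (i < m)%N),
      bnorm d o (x (Ordinal Hn)) = bnorm d o' (y (Ordinal Hm))) /\
  exists f : X -> X,
    [/\ bisometry d f, f o = o' &
        forall (i : nat) (Hn : (i < n)%N) (Hm : (i < m)%N),
          f (x (Ordinal Hn)) = y (Ordinal Hm)].
Proof.
have nm : n = m by apply/eqP; rewrite eqn_leq (base_card_le HB Hd Hx Hy) (base_card_le HB Hd Hy Hx).
subst m; split=> //.
have norms := base_norms_eq HB Hd Hx Hy.
split=> [i ltin ltin'|].
  by rewrite -(base_pointS o x) -(base_pointS o' y); apply: (norms i.+1).
have Fy : frame d n (base_point o' y) (base_norm d o x).
  have [N0 dQ cover] := base_frame Hd Hy.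
  split=> // J K ltJ ltK; rewrite dQ //.
  by rewrite /frame_dist !norms.
have [f [iso f_base]] := frame_isometry HB Hd Hconv (base_frame Hd Hx) Fy.
exists f; split=> //; first exact: (f_base 0%N).
by move=> i ltin ltin'; rewrite -(base_pointS o x) -(base_pointS o' y) f_base.
Qed.
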